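(* Consider $K$ sensors, each taking a binary decision $b_k\in\{0,1\}$, $k=1,\dots,K$, with conditionally i.i.d. decisions satisfying $P_D\triangleq P(b_k=1\mid\mathcal H_1)>P_F\triangleq P(b_k=1\mid\mathcal H_0)$. Each decision is sent over a binary symmetric channel with bit-error probability $P_{e,k}\le \tfrac12$, and the fusion center observes $y_k\in\{0,1\}$, with $y_k=b_k$ with probability $1-P_{e,k}$ and $y_k=1-b_k$ with probability $P_{e,k}$. For $P_1\in[0,1]$ let $\alpha_k(P_1)=(1-2P_{e,k})P_1+P_{e,k}$ and $\beta_k(P_1)=1-\alpha_k(P_1)$. Consider the statistics $$\Lambda_{\mathrm{LRT}}=\sum_{k=1}^K\Big\{y_k\ln\frac{\alpha_k(P_D)}{\alpha_k(P_F)}+(1-y_k)\ln\frac{\beta_k(P_D)}{\beta_k(P_F)}\Big\},\qquad \Lambda_{\mathrm{IS}}=\sum_{k=1}^K(2y_k-1)\ln\frac{1-P_{e,k}}{P_{e,k}},$$ $$\Lambda_{\mathrm{LOD}}=\Big(\sum_{k=1}^K\frac{(1-2P_{e,k})[(y_k-P_{e,k})-(1-2P_{e,k})P_F]}{\alpha_k(P_F)\beta_k(P_F)}\Big)\Big(\sum_{k=1}^K\frac{(1-2P_{e,k})^2}{\alpha_k(P_F)\beta_k(P_F)}\Big)^{-1/2},$$ $$\Lambda_{\mathrm{Wu}}=\hat P_D-P_F,\quad \hat P_D=\frac1K\sum_{k=1}^K[(1+2P_{e,k})y_k-P_{e,k}].$$ Then, when the SNR is low at each link (i.e. each $P_{e,k}$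 is close to $\tfrac12$, so that each per-sensor coefficient of the statistics may be replaced by its first-order Taylor expansion around $P_{e,k}=\tfrac12$), $\Lambda_{\mathrm{IS}}$ and $\Lambda_{\mathrm{LOD}}$ approach $\Lambda_{\mathrm{LRT}}$ (their low-SNR approximations are equivalent to that of $\Lambda_{\mathrm{LRT}}$, hence yield the same detection performance), while $\Lambda_{\mathrm{Wu}}$ does not. The $P_{e,k}$ need not be equal.
   Context: Two statistics are called equivalent if they are equal up to a scaling factor and an additive term, both finite and independent of $\boldsymbol y=(y_1,\dots,y_K)$, so that threshold tests based on them have the same performance. Low SNR at link $k$ corresponds to $P_{e,k}\to\tfrac12$. Each statistic is used in a test comparing it with a threshold to decide between $\mathcal H_0$ and $\mathcal H_1$. *)

From HB Require Import structures.
From mathcomp Require Import all_boot all_order all_algebra.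
From mathcomp Require Import all_classical all_reals all_analysis.
Set Implicit Arguments. Unset Strict Implicit. Unset Printing Implicit Defensive.
Import Order.TTheory GRing.Theory Num.Theory.
Local Open Scope ring_scope.

Section Defs.
Variable R : realType.

Definition alpha (pe P1 : R) : R := (1 - 2 * pe) * P1 + pe.
Definition beta (pe P1 : R) : R := 1 - alpha pe P1.

Definition lin_half (f : R -> R) (x : R) : R :=
  f (1 / 2) + derive1 f (1 / 2) * (x - 1 / 2).

Definition LRT_term (PD PF : R) (pe y : R) : R :=
  y * ln (alpha pe PD / alpha pe PF) + (1 - y) * ln (beta pe PD / beta pe PF).
Definition IS_term (pe y : R) : R := (2 * y - 1) * ln ((1 - pe) / pe).
Definition LOD_term (PF : R) (pe y : R) : R :=
  (1 - 2 * pe) * ((y - pe) - (1 - 2 * pe) * PF) / (alpha pe PF * beta pe PF).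
Definition Wu_term (pe y : R) : R := (1 + 2 * pe) * y - pe.

Definition LOD_norm (K : nat) (PF : R) (Pe : 'I_K -> R) : R :=
  (Num.sqrt (\sum_(k < K) (1 - 2 * Pe k) ^+ 2 / (alpha (Pe k) PF * beta (Pe k) PF)))^-1.

Definition Lambda_LRT (K : nat) (PD PF : R) (Pe : 'I_K -> R) (y : 'I_K -> bool) : R :=
  \sum_(k < K) LRT_term PD PF (Pe k) (y k)%:R.
Definition Lambda_IS (K : nat) (Pe : 'I_K -> R) (y : 'I_K -> bool) : R :=
  \sum_(k < K) IS_term (Pe k) (y k)%:R.
Definition Lambda_LOD (K : nat) (PF : R) (Pe : 'I_K -> R) (y : 'I_K -> bool) : R :=
  (\sum_(k < K) LOD_term PF (Pe k) (y k)%:R) * LOD_norm PF Pe.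
Definition Lambda_Wu (K : nat) (PF : R) (Pe : 'I_K -> R) (y : 'I_K -> bool) : R :=
  K%:R^-1 * (\sum_(k < K) Wu_term (Pe k) (y k)%:R) - PF.

(* Low-SNR approximations: each per-sensor term (i.e. each per-sensor
   coefficient) is replaced by its first-order Taylor expansion in Pe_k
   around Pe_k = 1/2; y-independent normalisations are kept exact. *)
Definition Lambda_LRT_low (K : nat) (PD PF : R) (Pe : 'I_K -> R) (y : 'I_K -> bool) : R :=
  \sum_(k < K) lin_half (fun p => LRT_term PD PF p (y k)%:R) (Pe k).
Definition Lambda_IS_low (K : nat) (Pe : 'I_K -> R) (y : 'I_K -> bool) : R :=
  \sum_(k < K) lin_half (fun p => IS_term p (y k)%:R) (Pe k).
Definition Lambda_LOD_low (K : nat) (PF : R) (Pe : 'I_K -> R) (y : 'I_K -> bool) : R :=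
  (\sum_(k < K) lin_half (fun p => LOD_term PF p (y k)%:R) (Pe k)) * LOD_norm PF Pe.
Definition Lambda_Wu_low (K : nat) (PF : R) (Pe : 'I_K -> R) (y : 'I_K -> bool) : R :=
  K%:R^-1 * (\sum_(k < K) lin_half (fun p => Wu_term p (y k)%:R) (Pe k)) - PF.

(* Two statistics are equivalent if L1 = a * L2 + b with a > 0 and b
   finite constants independent of y (threshold tests then coincide). *)
Definition equivalent (K : nat) (L1 L2 : ('I_K -> bool) -> R) : Prop :=
  exists a b : R, 0 < a /\ forall y, L1 y = a * L2 y + b.

End Defs.

From HB Require Import structures.
From mathcomp Require Import all_boot all_order all_algebra.
From mathcomp Require Import all_classical all_reals all_analysis.
From mathcomp Require Import ring lra.
Import Order.TTheory GRing.Theory Num.Theory.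
Local Open Scope ring_scope.

(* At Pe = 1/2 a link carries no information: the LRT, IS and LOD per-sensor
   terms all vanish there, and their derivatives in Pe are all multiples of
   2y - 1 by y-independent factors.  Hence the three linearised statistics are
   positive multiples of one another.  The Wu term is already affine in Pe;
   flipping the single received bit k moves the Wu statistic by (1 + 2 Pe_k)/K
   but the LRT statistic by a multiple of 1/2 - Pe_k, and no fixed rescaling
   matches these two ratios at two distinct values of Pe_k. *)

Section LowSNR.
Context {R : realType}.

Lemma lin_halfE {f : R -> R} {d : R} (x : R) : is_derive (1 / 2 : R) 1 f d ->
  lin_half f x = f (1 / 2) + d * (x - 1 / 2).
Proof. by move=> df; rewrite /lin_half derive1E derive_val. Qed.

Lemma is_derive_affine {f : R -> R} {a b : R} (x : R) :
  (forall p, f p = a * p + b) -> is_derive x 1 f a.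
Proof.
move=> fE; rewrite (funext fE).
have h := is_deriveD (is_deriveZ a (is_derive_id x 1)) (is_derive_cst b x 1).
by apply: is_derive_eq h _; rewrite addr0 /GRing.scale /= mulr1.
Qed.

Lemma lin_half_affine {f : R -> R} {a b : R} (x : R) :
  (forall p, f p = a * p + b) -> lin_half f x = f x.
Proof. by move=> fE; rewrite (lin_halfE _ (is_derive_affine (1 / 2) fE)) !fE; ring. Qed.

Lemma is_derive_mul_root {f g : R -> R} {x df dg : R} :
  is_derive x 1 f df -> is_derive x 1 g dg -> f x = 0 ->
  is_derive x 1 (fun p => f p * g p) (df * g x).
Proof.
move=> hf hg fx0; have h := is_deriveM hf hg.
by apply: is_derive_eq h _; rewrite fx0 /GRing.scale /= mul0r add0r mulrC.
Qed.

Lemma is_derive_ln_ratio {f g : R -> R} {x c df dg : R} :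
  is_derive x 1 f df -> is_derive x 1 g dg -> f x = c -> g x = c -> 0 < c ->
  is_derive x 1 (fun p => ln (f p / g p)) ((df - dg) / c).
Proof.
move=> hf hg fxc gxc c_gt0; have c_neq0 := lt0r_neq0 c_gt0.
have gx_neq0 : g x != 0 by rewrite gxc.
have hq := is_deriveM hf (is_deriveV gx_neq0 hg).
have q_gt0 : 0 < f x / g x by rewrite fxc gxc divff.
have h := @is_derive1_comp R (@ln R) (fun p => f p / g p) x _ _ (is_derive1_ln q_gt0) hq.
by apply: is_derive_eq h _; rewrite /GRing.scale /= fxc gxc; field.
Qed.

Lemma alpha_half (P : R) : alpha (1 / 2) P = 1 / 2.
Proof. by rewrite /alpha; field. Qed.

Lemma beta_half (P : R) : beta (1 / 2) P = 1 / 2.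
Proof. by rewrite /beta alpha_half; field. Qed.

Lemma is_derive_alpha (P x : R) : is_derive x 1 (fun p : R => alpha p P) (1 - 2 * P).
Proof. by apply: (is_derive_affine (b := P)) => p; rewrite /alpha; ring. Qed.

Lemma is_derive_beta (P x : R) : is_derive x 1 (fun p : R => beta p P) (2 * P - 1).
Proof. by apply: (is_derive_affine (b := 1 - P)) => p; rewrite /beta /alpha; ring. Qed.

Lemma alpha_beta_gt0 (pe P : R) : 0 < pe -> pe <= 1 / 2 -> 0 <= P -> P <= 1 ->
  0 < alpha pe P * beta pe P.
Proof.
move=> pe_gt0 pe_le P_ge0 P_le1.
have : 0 <= (1 - 2 * pe) * P by apply: mulr_ge0; lra.
have : 0 <= (1 - 2 * pe) * (1 - P) by apply: mulr_ge0; lra.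
by rewrite /beta /alpha => ? ?; apply: mulr_gt0; lra.
Qed.

Lemma LRT_term_lin_half (PD PF y x : R) :
  lin_half (fun p => LRT_term PD PF p y) x = 4 * (PD - PF) * (1 - 2 * y) * (x - 1 / 2).
Proof.
have half_gt0 : (0 : R) < 1 / 2 by [].
have dA := is_derive_ln_ratio (is_derive_alpha PD (1 / 2)) (is_derive_alpha PF _)
  (alpha_half PD) (alpha_half PF) half_gt0.
have dB := is_derive_ln_ratio (is_derive_beta PD (1 / 2)) (is_derive_beta PF _)
  (beta_half PD) (beta_half PF) half_gt0.
have d := is_deriveD (is_deriveM (is_derive_cst y (1 / 2 : R) 1) dA)
  (is_deriveM (is_derive_cst (1 - y) (1 / 2 : R) 1) dB).
rewrite (lin_halfE (f := fun p => LRT_term PD PF p y) x d) /LRT_term /=.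
by rewrite !alpha_half !beta_half divff // ln1 /GRing.scale /=; field.
Qed.

Lemma IS_term_lin_half (y x : R) :
  lin_half (fun p => IS_term p y) x = - 4 * (2 * y - 1) * (x - 1 / 2).
Proof.
have dN : is_derive (1 / 2 : R) 1 (fun p => 1 - p) (- 1).
  by apply: (is_derive_affine (b := 1)) => p; ring.
have dD : is_derive (1 / 2 : R) 1 (fun p => p) 1.
  by apply: (is_derive_affine (b := 0)) => p; ring.
have half_sub : 1 - 1 / 2 = 1 / 2 :> R by field.
have half_gt0 : (0 : R) < 1 / 2 by [].
have dL := is_derive_ln_ratio dN dD half_sub erefl half_gt0.
have d := is_deriveM (is_derive_cst (2 * y - 1) (1 / 2 : R) 1) dL.
rewrite (lin_halfE (f := fun p => IS_term p y) x d) /IS_term /= half_sub divff //.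
by rewrite ln1 /GRing.scale /=; field.
Qed.

Lemma LOD_term_lin_half (PF y x : R) :
  lin_half (fun p => LOD_term PF p y) x = - 4 * (2 * y - 1) * (x - 1 / 2).
Proof.
have dN1 : is_derive (1 / 2 : R) 1 (fun p => 1 - 2 * p) (- 2).
  by apply: (is_derive_affine (b := 1)) => p; ring.
have dN2 : is_derive (1 / 2 : R) 1 (fun p => (y - p) - (1 - 2 * p) * PF) (2 * PF - 1).
  by apply: (is_derive_affine (b := y - PF)) => p; ring.
have N1_half : 1 - 2 * (1 / 2) = 0 :> R by field.
have dN := is_derive_mul_root dN1 dN2 N1_half.
have D_half : alpha (1 / 2) PF * beta (1 / 2) PF != 0.
  by rewrite alpha_half beta_half.
have dD := is_deriveV (f := fun p => alpha p PF * beta p PF) D_half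
  (is_deriveM (is_derive_alpha PF _) (is_derive_beta PF _)).
have N_half : (1 - 2 * (1 / 2)) * (y - 1 / 2 - (1 - 2 * (1 / 2)) * PF) = 0 :> R.
  by rewrite N1_half mul0r.
have d := is_derive_mul_root dN dD N_half.
rewrite (lin_halfE (f := fun p => LOD_term PF p y) x d) /LOD_term /= N1_half.
by rewrite !alpha_half !beta_half; field.
Qed.

Lemma Wu_term_lin_half (y x : R) : lin_half (fun p => Wu_term p y) x = Wu_term x y.
Proof. by apply: (lin_half_affine (a := 2 * y - 1) (b := y)) => p; rewrite /Wu_term; ring. Qed.

(* Eliminating e between the two equations leaves c * 2 * (u - v) = 0. *)
Lemma affine_proportional_inj {c e u v : R} : c != 0 ->
  c * (1 + 2 * u) = e * (1 / 2 - u) -> c * (1 + 2 * v) = e * (1 / 2 - v) -> u = v.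
Proof.
move=> c_neq0 hu hv; apply/eqP; rewrite -subr_eq0.
have : c * 2 * (u - v) = 0.
  transitivity (c * (1 + 2 * u) * (1 / 2 - v) - c * (1 + 2 * v) * (1 / 2 - u)).
    by field.
  by rewrite hu hv; ring.
by move/eqP; rewrite !mulf_eq0 (negbTE c_neq0) pnatr_eq0.
Qed.

Context {K : nat}.
Implicit Types (PD PF : R) (Pe : 'I_K -> R) (y : 'I_K -> bool).

Lemma Lambda_LRT_low_IS PD PF Pe y :
  Lambda_LRT_low PD PF Pe y = (PD - PF) * Lambda_IS_low Pe y.
Proof.
rewrite /Lambda_LRT_low /Lambda_IS_low mulr_sumr; apply: eq_bigr => k _.
by rewrite LRT_term_lin_half IS_term_lin_half; ring.
Qed.

Lemma Lambda_LOD_low_IS PF Pe y :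
  Lambda_LOD_low PF Pe y = LOD_norm PF Pe * Lambda_IS_low Pe y.
Proof.
rewrite /Lambda_LOD_low /Lambda_IS_low mulrC; congr (_ * _); apply: eq_bigr => k _.
by rewrite LOD_term_lin_half IS_term_lin_half.
Qed.

Lemma LOD_norm_gt0 PF Pe : 0 <= PF -> PF <= 1 ->
  (forall k, 0 < Pe k /\ Pe k <= 1 / 2) -> (exists k, Pe k < 1 / 2) ->
  0 < LOD_norm PF Pe.
Proof.
move=> PF_ge0 PF_le1 Pe_range [k0 Pe_k0].
have ab_gt0 k : 0 < alpha (Pe k) PF * beta (Pe k) PF.
  by have [? ?] := Pe_range k; exact: alpha_beta_gt0.
rewrite /LOD_norm invr_gt0 sqrtr_gt0 (bigD1 k0) //=; apply: ltr_pwDl.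
  by apply: divr_gt0 => //; apply: exprn_gt0; lra.
by apply: sumr_ge0 => k _; apply: divr_ge0; [exact: sqr_ge0 | exact: ltW].
Qed.

Lemma sum_flip_one (G : 'I_K -> R -> R) (k : 'I_K) :
  \sum_(j < K) G j (j == k)%:R - \sum_(j < K) G j false%:R = G k 1 - G k 0.
Proof.
rewrite (bigD1 k) //= eqxx [X in _ - X](bigD1 k) //=.
rewrite (eq_bigr (fun j => G j false%:R)); last by move=> j /negbTE ->.
by rewrite opprD addrACA subrr addr0.
Qed.

Lemma equivalent_scale {L1 L2 : ('I_K -> bool) -> R} (c : R) :
  0 < c -> (forall y, L1 y = c * L2 y) -> equivalent L1 L2.
Proof. by move=> c_gt0 L12; exists c, 0; split=> // y; rewrite addr0. Qed.

Lemma equivalent_sub (L1 L2 : ('I_K -> bool) -> R) : equivalent L1 L2 ->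
  exists a, forall y y', L1 y - L1 y' = a * (L2 y - L2 y').
Proof. by move=> [a [b [_ L12]]]; exists a => y y'; rewrite !L12; ring. Qed.

Lemma Lambda_Wu_low_flip PF Pe (k : 'I_K) :
  Lambda_Wu_low PF Pe (fun j => j == k) - Lambda_Wu_low PF Pe (fun _ => false)
  = K%:R^-1 * (1 + 2 * Pe k).
Proof.
rewrite /Lambda_Wu_low opprB addrA subrK -mulrBr.
rewrite (sum_flip_one (fun j v => lin_half (fun p => Wu_term p v) (Pe j))).
by rewrite !Wu_term_lin_half /Wu_term; ring.
Qed.

Lemma Lambda_LRT_low_flip PD PF Pe (k : 'I_K) :
  Lambda_LRT_low PD PF Pe (fun j => j == k) - Lambda_LRT_low PD PF Pe (fun _ => false)
  = 8 * (PD - PF) * (1 / 2 - Pe k).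
Proof.
rewrite (sum_flip_one (fun j v => lin_half (fun p => LRT_term PD PF p v) (Pe j))).
by rewrite !LRT_term_lin_half; field.
Qed.

Lemma Lambda_Wu_low_not_equivalent PD PF Pe (i j : 'I_K) : Pe i <> Pe j ->
  ~ equivalent (Lambda_Wu_low PF Pe) (Lambda_LRT_low PD PF Pe).
Proof.
move=> Pe_ij /equivalent_sub [a Wu_LRT]; apply: Pe_ij.
have flip k : K%:R^-1 * (1 + 2 * Pe k) = a * (8 * (PD - PF)) * (1 / 2 - Pe k).
  by rewrite -(Lambda_Wu_low_flip PF) Wu_LRT Lambda_LRT_low_flip; ring.
apply: (affine_proportional_inj _ (flip i) (flip j)).
by rewrite invr_eq0 pnatr_eq0 -lt0n (leq_ltn_trans _ (ltn_ord i)).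
Qed.
End LowSNR.

Theorem proposition1 (R : realType) (K : nat) (PD PF : R) (Pe : 'I_K -> R) :
  0 <= PF -> PF < PD -> PD <= 1 ->
  (forall k, 0 < Pe k /\ Pe k <= 1 / 2) ->
  (exists k, Pe k < 1 / 2) ->
  equivalent (Lambda_IS_low Pe) (Lambda_LRT_low PD PF Pe) /\
  equivalent (Lambda_LOD_low PF Pe) (Lambda_LRT_low PD PF Pe) /\
  ((exists i j, Pe i <> Pe j) ->
     ~ equivalent (Lambda_Wu_low PF Pe) (Lambda_LRT_low PD PF Pe)).
Proof.
move=> PF_ge0 PF_lt_PD PD_le1 Pe_range Pe_lt.
have PDF_gt0 : 0 < PD - PF by rewrite subr_gt0.
have N_gt0 : 0 < LOD_norm PF Pe.
  by apply: LOD_norm_gt0 => //; exact: ltW (lt_le_trans PF_lt_PD PD_le1).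
split; [|split].
- apply: (equivalent_scale ((PD - PF)^-1)); first by rewrite invr_gt0.
  by move=> y; rewrite Lambda_LRT_low_IS mulKf ?lt0r_neq0.
- apply: (equivalent_scale (LOD_norm PF Pe / (PD - PF))); first exact: divr_gt0.
  by move=> y; rewrite Lambda_LOD_low_IS Lambda_LRT_low_IS mulrA divfK ?lt0r_neq0.
- by move=> [i [j]]; exact: Lambda_Wu_low_not_equivalent.
Qed.
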